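(* Let $\mathcal{M}=\mathcal{M}_{3,3}$ and let $\partial\mathcal{M}$ denote its topological boundary relative to $\Delta_7$. Every $p\in\partial\mathcal{M}$ has a $2\times2$ slice of rank at most one, i.e. $d_{i,j}(p)=0$ for some $i\in\{1,2,3\}$, $j\in\{0,1\}$; and the Zariski closure of $\partial\mathcal{M}$ is the union of the six hypersurfaces $\{d_{i,j}=0\}$, $1\le i\le 3$, $0\le j\le1$.
   Context: A distribution of three binary random variables is a $2\times2\times2$ tensor $p=(p_{ijk})_{i,j,k\in\{0,1\}}$ with nonnegative entries summing to $1$; the set of these is $\Delta_7$. $\mathcal{M}_{3,3}$ is the set of $p\in\Delta_7$ that are a sum of three tensors $a\otimes b\otimes c$ (entries $a_ib_jc_k$) with $a,b,c\in\mathbb{R}^2_{\ge0}$. The slice determinants are $d_{1,0}=p_{000}p_{011}-p_{001}p_{010}$, $d_{1,1}=p_{100}p_{111}-p_{101}p_{110}$, $d_{2,0}=p_{000}p_{101}-p_{001}p_{100}$, $d_{2,1}=p_{010}p_{111}-p_{011}p_{110}$, $d_{3,0}=p_{000}p_{110}-p_{010}p_{100}$, $d_{3,1}=p_{001}p_{111}-p_{011}p_{101}$. *)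

From Stdlib Require Import Reals.
Open Scope R_scope.

(* A 2x2x2 real tensor p = (p_ijk), i,j,k in {0,1} (false = 0, true = 1). *)
Definition tensor := bool -> bool -> bool -> R.

Definition tsum (p : tensor) : R :=
  p false false false + p false false true + p false true false + p false true true +
  p true false false + p true false true + p true true false + p true true true.

Definition Delta7 (p : tensor) : Prop :=
  (forall i j k, 0 <= p i j k) /\ tsum p = 1.

Definition nonneg2 (a : bool -> R) : Prop := 0 <= a false /\ 0 <= a true.

Definition M33 (p : tensor) : Prop :=
  Delta7 p /\
  exists a1 b1 c1 a2 b2 c2 a3 b3 c3 : bool -> R,
    nonneg2 a1 /\ nonneg2 b1 /\ nonneg2 c1 /\
    nonneg2 a2 /\ nonneg2 b2 /\ nonneg2 c2 /\
    nonneg2 a3 /\ nonneg2 b3 /\ nonneg2 c3 /\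
    forall i j k, p i j k = a1 i * b1 j * c1 k + a2 i * b2 j * c2 k + a3 i * b3 j * c3 k.

(* Topological boundary of M_{3,3} relative to Delta_7 (Euclidean topology on R^8;
   we use the equivalent sup-distance on entries). *)
Definition bdM (p : tensor) : Prop :=
  Delta7 p /\
  forall eps, 0 < eps ->
    (exists q, M33 q /\ forall i j k, Rabs (q i j k - p i j k) < eps) /\
    (exists q, Delta7 q /\ ~ M33 q /\ forall i j k, Rabs (q i j k - p i j k) < eps).

Definition d10 (p : tensor) : R :=
  p false false false * p false true true - p false false true * p false true false.
Definition d11 (p : tensor) : R :=
  p true false false * p true true true - p true false true * p true true false.
Definition d20 (p : tensor) : R :=
  p false false false * p true false true - p false false true * p true false false.
Definition d21 (p : tensor) : R :=
  p false true false * p true true true - p false true true * p true true false.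
Definition d30 (p : tensor) : R :=
  p false false false * p true true false - p false true false * p true false false.
Definition d31 (p : tensor) : R :=
  p false false true * p true true true - p false true true * p true false true.

Inductive poly8 : Type :=
  | PVar : bool -> bool -> bool -> poly8
  | PConst : R -> poly8
  | PAdd : poly8 -> poly8 -> poly8
  | PMul : poly8 -> poly8 -> poly8.

Fixpoint peval (f : poly8) (x : tensor) : R :=
  match f with
  | PVar i j k => x i j k
  | PConst r => r
  | PAdd f g => peval f x + peval g x
  | PMul f g => peval f x * peval g x
  end.

Definition zariski_closure (S : tensor -> Prop) (x : tensor) : Prop :=
  forall f : poly8, (forall y, S y -> peval f y = 0) -> peval f x = 0.

(* Write p = sum_r a_r (x) b_r (x) c_r with nonnegative factors, let A_0, A_1 be the rows of
   the first factor matrix and alpha = A_0 x A_1 their cross product, and define beta, gamma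
   likewise. By Cauchy-Binet, d_{1,i} = sum_k beta_k gamma_k A_{i,k+1} A_{i,k+2}, and similarly
   for the other modes. Since alpha is orthogonal to A_0 and A_1, a sign change
   d_{1,0} d_{1,1} < 0 forces a sign on alpha_k beta_k gamma_k minus the two other such
   products, for suitable k; a finite analysis of the possible sign patterns of alpha, beta,
   gamma then shows that the three products d_{i,0} d_{i,1} are never all negative on M_{3,3}.
   Conversely an explicit decomposition puts every point of Delta_7 with some
   d_{i,0} d_{i,1} > 0 into M_{3,3}. At a boundary point where no slice determinant vanishes
   the signs of the three products persist nearby, contradicting one of these two facts.

   For the Zariski closure, one inclusion follows from the first part. Conversely, the points
   of {tsum = 1, d_{1,0} = 0} at which d_{1,1} and the other two products are negative are
   boundary points, since tilting along p_011 - p_111 flips the sign of d_{1,0}. They contain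
   the image of an open box under a polynomial parametrisation of this hypersurface, so any
   polynomial vanishing on the boundary vanishes on the whole hypersurface; the other five
   hypersurfaces are images of this one under symmetries of the cube. *)

From Stdlib Require Import Reals Lra Psatz Lia List Bool ZArith.
Open Scope R_scope.

Inductive ix3 := J1 | J2 | J3.

Definition succ3 (k : ix3) : ix3 := match k with J1 => J2 | J2 => J3 | J3 => J1 end.
Definition pred3 (k : ix3) : ix3 := match k with J1 => J3 | J2 => J1 | J3 => J2 end.

Definition tri (x y z : R) (k : ix3) : R := match k with J1 => x | J2 => y | J3 => z end.

Definition nonneg3 (u : ix3 -> R) : Prop := forall k, 0 <= u k.

Definition dot (u v : ix3 -> R) : R := u J1 * v J1 + u J2 * v J2 + u J3 * v J3.

Definition cross (u v : ix3 -> R) (k : ix3) : R :=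
  u (succ3 k) * v (pred3 k) - u (pred3 k) * v (succ3 k).

Definition cyc (w P : ix3 -> R) : R :=
  w J1 * P J2 * P J3 + w J2 * P J3 * P J1 + w J3 * P J1 * P J2.

Lemma dot_cross_l u v : dot (cross u v) u = 0.
Proof. unfold dot, cross; simpl; ring. Qed.

Lemma dot_cross_r u v : dot (cross u v) v = 0.
Proof. unfold dot, cross; simpl; ring. Qed.

Lemma cross_swap u v k : cross v u k = - cross u v k.
Proof. unfold cross; ring. Qed.

(* If cross u v >= 0 had two positive entries, then u and v, being nonnegative and
   orthogonal to it, would vanish at both indices, making those two entries 0. *)
Lemma cross_nonneg_pos_succ u v k :
  nonneg3 u -> nonneg3 v -> nonneg3 (cross u v) ->
  0 < cross u v k -> cross u v (succ3 k) <= 0.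
Proof.
  intros Hu Hv Hc Hk.
  apply Rnot_lt_le; intro Hk'.
  assert (Hsupp : forall (x : ix3 -> R), nonneg3 x -> dot (cross u v) x = 0 ->
            x k = 0 /\ x (succ3 k) = 0).
  { intros x Hx Hdot; unfold dot in Hdot.
    pose proof (Hx J1); pose proof (Hx J2); pose proof (Hx J3).
    pose proof (Hc J1); pose proof (Hc J2); pose proof (Hc J3).
    destruct k; simpl in *; split; nra. }
  destruct (Hsupp u Hu (dot_cross_l u v)) as [Hu1 Hu2].
  destruct (Hsupp v Hv (dot_cross_r u v)) as [Hv1 Hv2].
  revert Hk'; unfold cross; destruct k; simpl in *;
    rewrite ?Hu1, ?Hu2, ?Hv1, ?Hv2; lra.
Qed.

Lemma cyc_nonneg w P : nonneg3 w -> nonneg3 P -> 0 <= cyc w P.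
Proof.
  intros Hw HP; unfold cyc.
  pose proof (Hw J1); pose proof (Hw J2); pose proof (Hw J3).
  pose proof (HP J1); pose proof (HP J2); pose proof (HP J3).
  repeat apply Rplus_le_le_0_compat; repeat apply Rmult_le_pos; assumption.
Qed.

Lemma cyc_opp w P : cyc (fun k => - w k) P = - cyc w P.
Proof. unfold cyc; ring. Qed.

Lemma cyc_sign_change_mixed w P0 P1 :
  nonneg3 P0 -> nonneg3 P1 -> cyc w P0 * cyc w P1 < 0 ->
  (exists k, 0 < w k) /\ (exists k, w k < 0).
Proof.
  intros H0 H1 Hneg.
  assert (Hnot : forall w', nonneg3 w' -> cyc w' P0 * cyc w' P1 < 0 -> False).
  { intros w' Hw' Hlt.
    pose proof (cyc_nonneg w' P0 Hw' H0); pose proof (cyc_nonneg w' P1 Hw' H1); nra. }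
  split.
  - destruct (Rlt_le_dec 0 (w J1)); [eauto|]. destruct (Rlt_le_dec 0 (w J2)); [eauto|].
    destruct (Rlt_le_dec 0 (w J3)); [eauto|].
    exfalso; apply (Hnot (fun k => - w k)); [intros []; lra|].
    rewrite !cyc_opp; nra.
  - destruct (Rlt_le_dec (w J1) 0); [eauto|]. destruct (Rlt_le_dec (w J2) 0); [eauto|].
    destruct (Rlt_le_dec (w J3) 0); [eauto|].
    exfalso; apply (Hnot w); [intros []; lra | exact Hneg].
Qed.

Lemma cyc_orth_identity (al w P : ix3 -> R) k : dot al P = 0 ->
  al k * cyc w P =
  (al k * w k - al (succ3 k) * w (succ3 k) - al (pred3 k) * w (pred3 k))
    * P (succ3 k) * P (pred3 k)
  - al (pred3 k) * w (succ3 k) * P (pred3 k) ^ 2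
  - al (succ3 k) * w (pred3 k) * P (succ3 k) ^ 2.
Proof.
  intro Hdot; apply Rminus_diag_uniq.
  rewrite <- (Rmult_0_r (w (succ3 k) * P (pred3 k) + w (pred3 k) * P (succ3 k))), <- Hdot.
  unfold cyc, dot; destruct k; simpl; ring.
Qed.

(* Both correction terms of [cyc_orth_identity] have sign [-s], so [cyc w] can only
   change sign on nonnegative vectors if the leading coefficient has sign [s]. *)
Lemma cyc_excess_pos (al w P0 P1 : ix3 -> R) (s : R) k :
  nonneg3 P0 -> nonneg3 P1 -> dot al P0 = 0 -> dot al P1 = 0 ->
  cyc w P0 * cyc w P1 < 0 -> al k <> 0 -> s * s = 1 ->
  0 <= s * (al (pred3 k) * w (succ3 k)) -> 0 <= s * (al (succ3 k) * w (pred3 k)) ->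
  0 < s * (al k * w k - al (succ3 k) * w (succ3 k) - al (pred3 k) * w (pred3 k)).
Proof.
  intros H0 H1 D0 D1 Hneg Hal Hs Hc1 Hc2.
  set (b := al k * w k - al (succ3 k) * w (succ3 k) - al (pred3 k) * w (pred3 k)).
  assert (Hle : forall P, nonneg3 P -> dot al P = 0 ->
            s * (al k * cyc w P) <= (s * b) * (P (succ3 k) * P (pred3 k))).
  { intros P HP HdP; rewrite (cyc_orth_identity al w P k HdP); fold b.
    assert (0 <= s * (al (pred3 k) * w (succ3 k)) * P (pred3 k) ^ 2)
      by (apply Rmult_le_pos; [exact Hc1 | apply pow2_ge_0]).
    assert (0 <= s * (al (succ3 k) * w (pred3 k)) * P (succ3 k) ^ 2)
      by (apply Rmult_le_pos; [exact Hc2 | apply pow2_ge_0]).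
    nra. }
  assert (Hprod : (s * (al k * cyc w P0)) * (s * (al k * cyc w P1)) < 0).
  { replace ((s * (al k * cyc w P0)) * (s * (al k * cyc w P1)))
      with ((s * s) * (al k * al k) * (cyc w P0 * cyc w P1)) by ring.
    rewrite Hs; assert (0 < al k * al k) by (apply Rsqr_pos_lt; exact Hal); nra. }
  pose proof (Hle P0 H0 D0); pose proof (Hle P1 H1 D1).
  assert (0 <= P0 (succ3 k) * P0 (pred3 k)) by (apply Rmult_le_pos; apply H0).
  assert (0 <= P1 (succ3 k) * P1 (pred3 k)) by (apply Rmult_le_pos; apply H1).
  destruct (Rlt_le_dec 0 (s * b)) as [Hb | Hb]; [exact Hb | exfalso].
  assert (s * (al k * cyc w P0) <= 0) by nra.
  assert (s * (al k * cyc w P1) <= 0) by nra.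
  nra.
Qed.

Definition sgnR (x : R) : Z :=
  match total_order_T x 0 with
  | inleft (left _) => (-1)%Z
  | inleft (right _) => 0%Z
  | inright _ => 1%Z
  end.

Lemma sgnR_cases x :
  (x < 0 /\ sgnR x = (-1)%Z) \/ (x = 0 /\ sgnR x = 0%Z) \/ (0 < x /\ sgnR x = 1%Z).
Proof. unfold sgnR; destruct (total_order_T x 0) as [[H | H] | H]; auto. Qed.

Lemma sgnR_mul x y : sgnR (x * y) = (sgnR x * sgnR y)%Z.
Proof.
  destruct (sgnR_cases x) as [[Hx ->] | [[Hx ->] | [Hx ->]]];
  destruct (sgnR_cases y) as [[Hy ->] | [[Hy ->] | [Hy ->]]];
  destruct (sgnR_cases (x * y)) as [[H ->] | [[H ->] | [H ->]]];
  subst; try reflexivity; exfalso; nra.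
Qed.

Lemma sgnR_opp x : sgnR (- x) = (- sgnR x)%Z.
Proof.
  destruct (sgnR_cases x) as [[Hx ->] | [[Hx ->] | [Hx ->]]];
  destruct (sgnR_cases (- x)) as [[H ->] | [[H ->] | [H ->]]];
  try reflexivity; exfalso; lra.
Qed.

Lemma sgnR_nonneg x : (0 <= sgnR x)%Z -> 0 <= x.
Proof. destruct (sgnR_cases x) as [[Hx ->] | [[Hx ->] | [Hx ->]]]; lia || lra. Qed.

Lemma sgnR_pos x : (0 < sgnR x)%Z -> 0 < x.
Proof. destruct (sgnR_cases x) as [[Hx ->] | [[Hx ->] | [Hx ->]]]; lia || lra. Qed.

Lemma sgnR_neq0 x : sgnR x <> 0%Z -> x <> 0.
Proof. destruct (sgnR_cases x) as [[Hx ->] | [[Hx ->] | [Hx ->]]]; lia || lra. Qed.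

Lemma sgnR_of_pos x : 0 < x -> (0 < sgnR x)%Z.
Proof. destruct (sgnR_cases x) as [[Hx ->] | [[Hx ->] | [Hx ->]]]; lia || lra. Qed.

Lemma sgnR_of_neg x : x < 0 -> (sgnR x < 0)%Z.
Proof. destruct (sgnR_cases x) as [[Hx ->] | [[Hx ->] | [Hx ->]]]; lia || lra. Qed.

Lemma sgnR_unit (s : Z) : s = 1%Z \/ s = (-1)%Z -> sgnR (IZR s) = s.
Proof.
  intros [-> | ->]; unfold sgnR;
    destruct (total_order_T _ 0) as [[H | H] | H]; try reflexivity; exfalso; lra.
Qed.

Definition ixs : list ix3 := J1 :: J2 :: J3 :: nil.

Definition ix3_eqb (k l : ix3) : bool :=
  match k, l with J1, J1 | J2, J2 | J3, J3 => true | _, _ => false end.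

Definition mixedb (f : ix3 -> Z) : bool :=
  existsb (fun k => (0 <? f k)%Z) ixs && existsb (fun k => (f k <? 0)%Z) ixs.

Definition two_posb (f : ix3 -> Z) : bool :=
  forallb (fun k => (0 <=? f k)%Z) ixs &&
  existsb (fun k => (0 <? f k)%Z && (0 <? f (succ3 k))%Z) ixs.

Definition admissibleb (f : ix3 -> Z) : bool :=
  negb (two_posb f) && negb (two_posb (fun k => - f k)%Z).

Definition finishb (a b c : ix3 -> Z) (ka kb m : ix3) (s : Z) : bool :=
  negb (ix3_eqb ka kb) && negb (ix3_eqb ka m) && negb (ix3_eqb kb m) &&
  negb (a ka =? 0)%Z && negb (b kb =? 0)%Z &&
  (0 <=? s * (a (pred3 ka) * (b (succ3 ka) * c (succ3 ka))))%Z &&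
  (0 <=? s * (a (succ3 ka) * (b (pred3 ka) * c (pred3 ka))))%Z &&
  (0 <=? s * (b (pred3 kb) * (a (succ3 kb) * c (succ3 kb))))%Z &&
  (0 <=? s * (b (succ3 kb) * (a (pred3 kb) * c (pred3 kb))))%Z &&
  (0 <? s * (a m * (b m * c m)))%Z.

Definition pattern_hypb (a b c : ix3 -> Z) : bool :=
  admissibleb a && admissibleb b && admissibleb c &&
  mixedb (fun k => b k * c k)%Z && mixedb (fun k => a k * c k)%Z &&
  mixedb (fun k => a k * b k)%Z.

Definition pattern_conclb (a b c : ix3 -> Z) : bool :=
  existsb (fun ka => existsb (fun kb => existsb (fun m =>
    existsb (finishb a b c ka kb m) (1 :: -1 :: nil)%Z) ixs) ixs) ixs.

Definition at3 (t : Z * Z * Z) (k : ix3) : Z :=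
  let '(x, y, z) := t in match k with J1 => x | J2 => y | J3 => z end.

Definition sign_triples : list (Z * Z * Z) :=
  let signs := (-1 :: 0 :: 1 :: nil)%Z in
  flat_map (fun x => flat_map (fun y => map (fun z => (x, y, z)) signs) signs) signs.

(* [pattern_hypb] describes the signs of three cross products of nonnegative vectors whose
   pairwise products change sign; [pattern_conclb] asks for the indices and common sign
   needed by [cyc_excess_pos] twice. *)
Lemma sign_patterns_checked :
  forallb (fun a => forallb (fun b => forallb (fun c =>
    implb (pattern_hypb (at3 a) (at3 b) (at3 c)) (pattern_conclb (at3 a) (at3 b) (at3 c)))
    sign_triples) sign_triples) sign_triples = true.
Proof. vm_compute; reflexivity. Qed.

Lemma sign_pattern_witness a b c :
  In a sign_triples -> In b sign_triples -> In c sign_triples ->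
  pattern_hypb (at3 a) (at3 b) (at3 c) = true -> pattern_conclb (at3 a) (at3 b) (at3 c) = true.
Proof.
  intros Ha Hb Hc Hhyp; pose proof sign_patterns_checked as Hall.
  rewrite forallb_forall in Hall; specialize (Hall a Ha).
  rewrite forallb_forall in Hall; specialize (Hall b Hb).
  rewrite forallb_forall in Hall; specialize (Hall c Hc).
  rewrite Hhyp in Hall; exact Hall.
Qed.

Definition signs3 (u : ix3 -> R) : Z * Z * Z := (sgnR (u J1), sgnR (u J2), sgnR (u J3)).

Lemma at3_signs3 u k : at3 (signs3 u) k = sgnR (u k).
Proof. destruct k; reflexivity. Qed.

Lemma signs3_in u : In (signs3 u) sign_triples.
Proof.
  unfold signs3.
  destruct (sgnR_cases (u J1)) as [[_ ->] | [[_ ->] | [_ ->]]];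
  destruct (sgnR_cases (u J2)) as [[_ ->] | [[_ ->] | [_ ->]]];
  destruct (sgnR_cases (u J3)) as [[_ ->] | [[_ ->] | [_ ->]]];
  simpl; tauto.
Qed.

Lemma mixedb_of_signs (f : ix3 -> Z) (w : ix3 -> R) : (forall k, f k = sgnR (w k)) ->
  (exists k, 0 < w k) -> (exists k, w k < 0) -> mixedb f = true.
Proof.
  intros Hf [k Hk] [l Hl]; unfold mixedb; apply andb_true_intro; split;
    apply existsb_exists; [exists k | exists l]; (split; [destruct k, l; simpl; tauto|]);
    rewrite Hf; apply Z.ltb_lt; [apply sgnR_of_pos | apply sgnR_of_neg]; assumption.
Qed.

Lemma two_posb_signs (f : ix3 -> Z) (w : ix3 -> R) : (forall k, f k = sgnR (w k)) ->
  two_posb f = true -> nonneg3 w /\ exists k, 0 < w k /\ 0 < w (succ3 k).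
Proof.
  intros Hf; unfold two_posb; rewrite andb_true_iff, forallb_forall, existsb_exists.
  intros [Hall [k [_ Hk]]]; split.
  - intro j; apply sgnR_nonneg; rewrite <- Hf; apply Z.leb_le, Hall; destruct j; simpl; tauto.
  - exists k; apply andb_true_iff in Hk as [H1 H2].
    rewrite Hf in H1, H2; split; apply sgnR_pos, Z.ltb_lt; assumption.
Qed.

Lemma admissibleb_cross (f : ix3 -> Z) u v : nonneg3 u -> nonneg3 v ->
  (forall k, f k = sgnR (cross u v k)) -> admissibleb f = true.
Proof.
  intros Hu Hv Hf.
  assert (Hnot : forall (g : ix3 -> Z) x y, nonneg3 x -> nonneg3 y ->
            (forall k, g k = sgnR (cross x y k)) -> two_posb g = false).
  { intros g x y Hx Hy Hg; destruct (two_posb g) eqn:E; [exfalso | reflexivity].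
    destruct (two_posb_signs g _ Hg E) as [Hn [k [H1 H2]]].
    pose proof (cross_nonneg_pos_succ x y k Hx Hy Hn H1); lra. }
  unfold admissibleb; rewrite (Hnot f u v Hu Hv Hf), (Hnot _ v u Hv Hu); [reflexivity|].
  intro k; rewrite Hf, (cross_swap u v), sgnR_opp; reflexivity.
Qed.

Lemma sgnR_scaled_nonneg (s : Z) x : s = 1%Z \/ s = (-1)%Z ->
  (0 <=? s * sgnR x)%Z = true -> 0 <= IZR s * x.
Proof.
  intros Hs H; apply sgnR_nonneg; rewrite sgnR_mul, sgnR_unit by exact Hs; lia.
Qed.

Lemma sgnR_scaled_pos (s : Z) x : s = 1%Z \/ s = (-1)%Z ->
  (0 <? s * sgnR x)%Z = true -> 0 < IZR s * x.
Proof.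
  intros Hs H; apply sgnR_pos; rewrite sgnR_mul, sgnR_unit by exact Hs; lia.
Qed.

Lemma excess_pair_absurd (pi : ix3 -> R) (s : R) ka kb m :
  ix3_eqb ka kb = false -> ix3_eqb ka m = false -> ix3_eqb kb m = false ->
  0 < s * (pi ka - pi (succ3 ka) - pi (pred3 ka)) ->
  0 < s * (pi kb - pi (succ3 kb) - pi (pred3 kb)) ->
  0 < s * pi m -> False.
Proof. destruct ka, kb, m; simpl; try discriminate; intros; lra. Qed.

Lemma sign_witness (al be ga : ix3 -> R) :
  pattern_hypb (at3 (signs3 al)) (at3 (signs3 be)) (at3 (signs3 ga)) = true ->
  exists ka kb m s, s * s = 1 /\
    ix3_eqb ka kb = false /\ ix3_eqb ka m = false /\ ix3_eqb kb m = false /\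
    al ka <> 0 /\ be kb <> 0 /\
    0 <= s * (al (pred3 ka) * (be (succ3 ka) * ga (succ3 ka))) /\
    0 <= s * (al (succ3 ka) * (be (pred3 ka) * ga (pred3 ka))) /\
    0 <= s * (be (pred3 kb) * (al (succ3 kb) * ga (succ3 kb))) /\
    0 <= s * (be (succ3 kb) * (al (pred3 kb) * ga (pred3 kb))) /\
    0 < s * (al m * (be m * ga m)).
Proof.
  intro Hhyp; apply sign_pattern_witness in Hhyp; try apply signs3_in.
  unfold pattern_conclb in Hhyp.
  apply existsb_exists in Hhyp as [ka [_ Hhyp]].
  apply existsb_exists in Hhyp as [kb [_ Hhyp]].
  apply existsb_exists in Hhyp as [m [_ Hhyp]].
  apply existsb_exists in Hhyp as [s [Hs Hhyp]].
  assert (Hs' : s = 1%Z \/ s = (-1)%Z) by (destruct Hs as [<- | [<- | []]]; auto).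
  exists ka, kb, m, (IZR s); split; [destruct Hs' as [-> | ->]; simpl; lra|].
  unfold finishb in Hhyp; rewrite !at3_signs3, <- !sgnR_mul in Hhyp.
  repeat match goal with H : _ && _ = true |- _ => apply andb_prop in H as [? ?] end.
  repeat match goal with
         | H : negb (ix3_eqb _ _) = true |- _ => apply negb_true_iff in H
         | H : negb (sgnR _ =? 0)%Z = true |- _ =>
             apply negb_true_iff, Z.eqb_neq, sgnR_neq0 in H
         | H : (0 <=? _ * sgnR _)%Z = true |- _ => apply (sgnR_scaled_nonneg _ _ Hs') in H
         | H : (0 <? _ * sgnR _)%Z = true |- _ => apply (sgnR_scaled_pos _ _ Hs') in H
         end.
  tauto.
Qed.

Lemma cross_triple_obstruction (A0 A1 B0 B1 C0 C1 : ix3 -> R) :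
  nonneg3 A0 -> nonneg3 A1 -> nonneg3 B0 -> nonneg3 B1 -> nonneg3 C0 -> nonneg3 C1 ->
  cyc (fun k => cross B0 B1 k * cross C0 C1 k) A0 *
    cyc (fun k => cross B0 B1 k * cross C0 C1 k) A1 < 0 ->
  cyc (fun k => cross A0 A1 k * cross C0 C1 k) B0 *
    cyc (fun k => cross A0 A1 k * cross C0 C1 k) B1 < 0 ->
  cyc (fun k => cross A0 A1 k * cross B0 B1 k) C0 *
    cyc (fun k => cross A0 A1 k * cross B0 B1 k) C1 < 0 ->
  False.
Proof.
  intros HA0 HA1 HB0 HB1 HC0 HC1 FA FB FC.
  set (al := cross A0 A1) in *; set (be := cross B0 B1) in *; set (ga := cross C0 C1) in *.
  assert (Hmixed : forall (u v : ix3 -> R) P0 P1, nonneg3 P0 -> nonneg3 P1 ->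
            cyc (fun k => u k * v k) P0 * cyc (fun k => u k * v k) P1 < 0 ->
            mixedb (fun k => at3 (signs3 u) k * at3 (signs3 v) k)%Z = true).
  { intros u v P0 P1 H0 H1 H; destruct (cyc_sign_change_mixed _ _ _ H0 H1 H).
    apply (mixedb_of_signs _ (fun k => u k * v k)); [|assumption..].
    intro k; rewrite !at3_signs3, sgnR_mul; reflexivity. }
  assert (Hhyp : pattern_hypb (at3 (signs3 al)) (at3 (signs3 be)) (at3 (signs3 ga)) = true).
  { unfold pattern_hypb.
    rewrite (admissibleb_cross _ A0 A1), (admissibleb_cross _ B0 B1),
      (admissibleb_cross _ C0 C1) by (assumption || exact (at3_signs3 _)).
    rewrite (Hmixed be ga A0 A1), (Hmixed al ga B0 B1), (Hmixed al be C0 C1) by assumption.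
    reflexivity. }
  destruct (sign_witness al be ga Hhyp)
    as (ka & kb & m & s & Hs & Dab & Dam & Dbm & Ha & Hb & Ha1 & Ha2 & Hb1 & Hb2 & Hm).
  pose proof (cyc_excess_pos al (fun k => be k * ga k) A0 A1 s ka HA0 HA1
    (dot_cross_l A0 A1) (dot_cross_r A0 A1) FA Ha Hs Ha1 Ha2) as Ka.
  pose proof (cyc_excess_pos be (fun k => al k * ga k) B0 B1 s kb HB0 HB1
    (dot_cross_l B0 B1) (dot_cross_r B0 B1) FB Hb Hs Hb1 Hb2) as Kb.
  apply (excess_pair_absurd (fun k => al k * (be k * ga k)) s ka kb m Dab Dam Dbm Ka);
    [|exact Hm].
  assert (E : forall k, al k * (be k * ga k) = be k * (al k * ga k)) by (intro; ring).
  cbv beta; rewrite !E; exact Kb.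
Qed.

Definition factor3 (x1 x2 x3 : bool -> R) (i : bool) : ix3 -> R := tri (x1 i) (x2 i) (x3 i).

Section CauchyBinet.
Variables a1 b1 c1 a2 b2 c2 a3 b3 c3 : bool -> R.
Let p i j k := a1 i * b1 j * c1 k + a2 i * b2 j * c2 k + a3 i * b3 j * c3 k.
Let A := factor3 a1 a2 a3.
Let B := factor3 b1 b2 b3.
Let C := factor3 c1 c2 c3.

Lemma slice_det_mode1 i :
  p i false false * p i true true - p i false true * p i true false =
  cyc (fun r => cross (B false) (B true) r * cross (C false) (C true) r) (A i).
Proof. unfold p, A, B, C, factor3, cyc, cross; simpl; ring. Qed.

Lemma slice_det_mode2 j :
  p false j false * p true j true - p false j true * p true j false =
  cyc (fun r => cross (A false) (A true) r * cross (C false) (C true) r) (B j).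
Proof. unfold p, A, B, C, factor3, cyc, cross; simpl; ring. Qed.

Lemma slice_det_mode3 k :
  p false false k * p true true k - p false true k * p true false k =
  cyc (fun r => cross (A false) (A true) r * cross (B false) (B true) r) (C k).
Proof. unfold p, A, B, C, factor3, cyc, cross; simpl; ring. Qed.
End CauchyBinet.

Lemma M33_slice_dets_not_all_neg p : M33 p ->
  ~ (d10 p * d11 p < 0 /\ d20 p * d21 p < 0 /\ d30 p * d31 p < 0).
Proof.
  intros [_ (a1 & b1 & c1 & a2 & b2 & c2 & a3 & b3 & c3 &
             Ha1 & Hb1 & Hc1 & Ha2 & Hb2 & Hc2 & Ha3 & Hb3 & Hc3 & E)] [F1 [F2 F3]].
  assert (Hnn : forall x1 x2 x3 i, nonneg2 x1 -> nonneg2 x2 -> nonneg2 x3 ->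
            nonneg3 (factor3 x1 x2 x3 i)).
  { intros x1 x2 x3 i H1 H2 H3 [];
      unfold nonneg2 in *; destruct i; simpl; tauto. }
  unfold d10, d11, d20, d21, d30, d31 in *; rewrite !E in F1, F2, F3.
  rewrite (slice_det_mode1 _ _ _ _ _ _ _ _ _ false),
    (slice_det_mode1 _ _ _ _ _ _ _ _ _ true) in F1.
  rewrite (slice_det_mode2 _ _ _ _ _ _ _ _ _ false),
    (slice_det_mode2 _ _ _ _ _ _ _ _ _ true) in F2.
  rewrite (slice_det_mode3 _ _ _ _ _ _ _ _ _ false),
    (slice_det_mode3 _ _ _ _ _ _ _ _ _ true) in F3.
  exact (cross_triple_obstruction _ _ _ _ _ _
    (Hnn _ _ _ _ Ha1 Ha2 Ha3) (Hnn _ _ _ _ Ha1 Ha2 Ha3) (Hnn _ _ _ _ Hb1 Hb2 Hb3)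
    (Hnn _ _ _ _ Hb1 Hb2 Hb3) (Hnn _ _ _ _ Hc1 Hc2 Hc3) (Hnn _ _ _ _ Hc1 Hc2 Hc3) F1 F2 F3).
Qed.

Definition is_poly (F : tensor -> R) : Prop := exists f : poly8, forall y, peval f y = F y.

Lemma is_poly_coord i j k : is_poly (fun y => y i j k).
Proof. exists (PVar i j k); reflexivity. Qed.

Lemma is_poly_const c : is_poly (fun _ => c).
Proof. exists (PConst c); reflexivity. Qed.

Lemma is_poly_add F G : is_poly F -> is_poly G -> is_poly (fun y => F y + G y).
Proof. intros [f Hf] [g Hg]; exists (PAdd f g); intro y; simpl; rewrite Hf, Hg; reflexivity. Qed.

Lemma is_poly_mul F G : is_poly F -> is_poly G -> is_poly (fun y => F y * G y).
Proof. intros [f Hf] [g Hg]; exists (PMul f g); intro y; simpl; rewrite Hf, Hg; reflexivity. Qed.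

Lemma is_poly_sub F G : is_poly F -> is_poly G -> is_poly (fun y => F y - G y).
Proof.
  intros HF HG; destruct (is_poly_add _ _ HF (is_poly_mul _ _ (is_poly_const (-1)) HG)) as [f Hf].
  exists f; intro y; rewrite Hf; ring.
Qed.

Lemma is_poly_peval_comp (T : tensor -> tensor) :
  (forall i j k, is_poly (fun y => T y i j k)) -> forall f, is_poly (fun y => peval f (T y)).
Proof.
  intros HT f; induction f; simpl;
    auto using is_poly_const, is_poly_add, is_poly_mul.
Qed.

Ltac solve_is_poly :=
  repeat first [ apply is_poly_coord | apply is_poly_const | apply is_poly_sub
               | apply is_poly_add | apply is_poly_mul ].

Lemma is_poly_slice_dets :
  is_poly d10 /\ is_poly d11 /\ is_poly d20 /\ is_poly d21 /\ is_poly d30 /\ is_poly d31.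
Proof. repeat split; solve_is_poly. Qed.

Definition close (e : R) (q p : tensor) : Prop := forall i j k, Rabs (q i j k - p i j k) < e.

Lemma close_le e e' q p : e <= e' -> close e q p -> close e' q p.
Proof. intros He H i j k; specialize (H i j k); lra. Qed.

Definition sup_continuous_at (F : tensor -> R) (p : tensor) : Prop :=
  forall e, 0 < e -> exists eta, 0 < eta /\ forall q, close eta q p -> Rabs (F q - F p) < e.

Lemma product_perturbation a b x y d : Rabs x < d -> Rabs y < d -> d <= 1 ->
  Rabs ((a + x) * (b + y) - a * b) <= d * (Rabs a + Rabs b + 1).
Proof.
  intros Hx Hy Hd.
  replace ((a + x) * (b + y) - a * b) with (x * (b + y) + a * y) by ring.
  eapply Rle_trans; [apply Rabs_triang|].
  rewrite !Rabs_mult.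
  assert (Rabs (b + y) <= Rabs b + 1) by (eapply Rle_trans; [apply Rabs_triang | lra]).
  pose proof (Rabs_pos x); pose proof (Rabs_pos a); pose proof (Rabs_pos (b + y)).
  assert (Rabs x * Rabs (b + y) <= d * (Rabs b + 1)) by (apply Rmult_le_compat; lra).
  assert (Rabs a * Rabs y <= Rabs a * d) by (apply Rmult_le_compat_l; lra).
  nra.
Qed.

Lemma sup_continuous_add F G p :
  sup_continuous_at F p -> sup_continuous_at G p -> sup_continuous_at (fun y => F y + G y) p.
Proof.
  intros HF HG e He.
  destruct (HF (e / 2)) as [e1 [He1 H1]]; [lra|].
  destruct (HG (e / 2)) as [e2 [He2 H2]]; [lra|].
  exists (Rmin e1 e2); split; [apply Rmin_pos; assumption|]; intros q Hq.
  specialize (H1 q (close_le _ _ _ _ (Rmin_l e1 e2) Hq)).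
  specialize (H2 q (close_le _ _ _ _ (Rmin_r e1 e2) Hq)).
  replace (F q + G q - (F p + G p)) with ((F q - F p) + (G q - G p)) by ring.
  eapply Rle_lt_trans; [apply Rabs_triang | lra].
Qed.

Lemma sup_continuous_mul F G p :
  sup_continuous_at F p -> sup_continuous_at G p -> sup_continuous_at (fun y => F y * G y) p.
Proof.
  intros HF HG e He.
  set (M := Rabs (F p) + Rabs (G p) + 1).
  assert (HM : 0 < M) by (unfold M; pose proof (Rabs_pos (F p)); pose proof (Rabs_pos (G p)); lra).
  set (d := Rmin 1 (e / (2 * M))).
  assert (Hd : 0 < d) by (apply Rmin_pos; [lra | apply Rdiv_lt_0_compat; lra]).
  destruct (HF d Hd) as [e1 [He1 H1]]; destruct (HG d Hd) as [e2 [He2 H2]].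
  exists (Rmin e1 e2); split; [apply Rmin_pos; assumption|]; intros q Hq.
  specialize (H1 q (close_le _ _ _ _ (Rmin_l e1 e2) Hq)).
  specialize (H2 q (close_le _ _ _ _ (Rmin_r e1 e2) Hq)).
  replace (F q * G q - F p * G p)
    with ((F p + (F q - F p)) * (G p + (G q - G p)) - F p * G p) by ring.
  eapply Rle_lt_trans; [apply (product_perturbation _ _ _ _ d H1 H2 (Rmin_l _ _))|].
  assert (d * M <= e / (2 * M) * M) by (apply Rmult_le_compat_r; [lra | apply Rmin_r]).
  replace (e / (2 * M) * M) with (e / 2) in * by (field; lra).
  fold M; lra.
Qed.

Lemma is_poly_sup_continuous F p : is_poly F -> sup_continuous_at F p.
Proof.
  intros [f Hf].
  assert (Hc : forall g : poly8, sup_continuous_at (peval g) p).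
  { intro g; induction g as [i j k | c | g IHg h IHh | g IHg h IHh]; simpl.
    - intros e He; exists e; split; [exact He | intros q Hq; apply Hq].
    - intros e He; exists 1; split; [lra | intros q _; rewrite Rminus_diag, Rabs_R0; exact He].
    - exact (sup_continuous_add _ _ p IHg IHh).
    - exact (sup_continuous_mul _ _ p IHg IHh). }
  intros e He; destruct (Hc f e He) as [eta [Heta H]].
  exists eta; split; [exact Heta | intros q Hq; rewrite <- !Hf; exact (H q Hq)].
Qed.

Definition near (p : tensor) (G : tensor -> Prop) : Prop :=
  exists eta, 0 < eta /\ forall q, close eta q p -> G q.

Lemma near_and p G H : near p G -> near p H -> near p (fun q => G q /\ H q).
Proof.
  intros [e1 [He1 H1]] [e2 [He2 H2]]; exists (Rmin e1 e2); split; [apply Rmin_pos; assumption|].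
  intros q Hq; split; [apply H1 | apply H2]; eapply close_le; [| exact Hq | | exact Hq];
    [apply Rmin_l | apply Rmin_r].
Qed.

Lemma near_impl p (G H : tensor -> Prop) : (forall q, G q -> H q) -> near p G -> near p H.
Proof. intros HGH [e [He H1]]; exists e; split; auto. Qed.

Lemma near_forall_bool p (G : bool -> tensor -> Prop) :
  (forall b, near p (G b)) -> near p (fun q => forall b, G b q).
Proof.
  intros H; apply (near_impl p (fun q => G false q /\ G true q)).
  - intros q [Hf Ht] []; assumption.
  - apply near_and; apply H.
Qed.

Lemma near_pos p F : is_poly F -> 0 < F p -> near p (fun q => 0 < F q).
Proof.
  intros HF Hp; destruct (is_poly_sup_continuous F p HF (F p) Hp) as [eta [He H]].
  exists eta; split; [exact He|]; intros q Hq; specialize (H q Hq).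
  apply Rabs_def2 in H; lra.
Qed.

Lemma near_neg p F : is_poly F -> F p < 0 -> near p (fun q => F q < 0).
Proof.
  intros HF Hp; apply (near_impl p (fun q => 0 < 0 - F q)); [intros; lra|].
  apply near_pos; [apply is_poly_sub; [apply is_poly_const | exact HF] | lra].
Qed.

Definition reindex (s : bool -> bool -> bool -> bool * bool * bool) (p : tensor) : tensor :=
  fun i j k => let '(a, b, c) := s i j k in p a b c.

Definition swap12 (i j k : bool) : bool * bool * bool := (j, i, k).
Definition swap13 (i j k : bool) : bool * bool * bool := (k, j, i).
Definition flip1 (i j k : bool) : bool * bool * bool := (negb i, j, k).
Definition flip3 (i j k : bool) : bool * bool * bool := (i, j, negb k).

Lemma Delta7_ext p q : (forall i j k, p i j k = q i j k) -> Delta7 p -> Delta7 q.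
Proof.
  intros E [Hnn Hsum]; split; [intros i j k; rewrite <- E; apply Hnn|].
  unfold tsum in *; rewrite <- !E; exact Hsum.
Qed.

Lemma M33_ext p q : (forall i j k, p i j k = q i j k) -> M33 p -> M33 q.
Proof.
  intros E [HD (a1 & b1 & c1 & a2 & b2 & c2 & a3 & b3 & c3 & H)].
  split; [exact (Delta7_ext p q E HD)|].
  exists a1, b1, c1, a2, b2, c2, a3, b3, c3.
  do 9 (destruct H as [? H]; split; [assumption|]).
  intros i j k; rewrite <- E; apply H.
Qed.

Lemma close_reindex s e q p : close e q p -> close e (reindex s q) (reindex s p).
Proof. intros H i j k; unfold reindex; destruct (s i j k) as [[a b] c]; apply H. Qed.

Lemma is_poly_peval_reindex s f : is_poly (fun y => peval f (reindex s y)).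
Proof.
  apply is_poly_peval_comp; intros i j k; unfold reindex.
  destruct (s i j k) as [[a b] c]; apply is_poly_coord.
Qed.

Record cube_symmetry (s : bool -> bool -> bool -> bool * bool * bool) : Prop := {
  sym_invol : forall p i j k, reindex s (reindex s p) i j k = p i j k;
  sym_tsum : forall p, tsum (reindex s p) = tsum p;
  sym_M33 : forall p, M33 p -> M33 (reindex s p)
}.

Lemma Delta7_reindex s p : (forall q, tsum (reindex s q) = tsum q) ->
  Delta7 p -> Delta7 (reindex s p).
Proof.
  intros Hsum [Hnn Hp]; split; [|rewrite Hsum; exact Hp].
  intros i j k; unfold reindex; destruct (s i j k) as [[a b] c]; apply Hnn.
Qed.

Ltac intro_M33_reindex :=
  intros p [HD (a1 & b1 & c1 & a2 & b2 & c2 & a3 & b3 & c3 &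
                Ha1 & Hb1 & Hc1 & Ha2 & Hb2 & Hc2 & Ha3 & Hb3 & Hc3 & E)];
  split; [apply Delta7_reindex; [intro q; unfold tsum, reindex; simpl; ring | exact HD]|].

Lemma cube_symmetry_swap12 : cube_symmetry swap12.
Proof.
  split; [reflexivity | intro q; unfold tsum, reindex; simpl; ring | intro_M33_reindex].
  exists b1, a1, c1, b2, a2, c2, b3, a3, c3.
  do 9 (split; [assumption|]).
  intros i j k; unfold reindex; simpl; rewrite E; ring.
Qed.

Lemma cube_symmetry_swap13 : cube_symmetry swap13.
Proof.
  split; [reflexivity | intro q; unfold tsum, reindex; simpl; ring | intro_M33_reindex].
  exists c1, b1, a1, c2, b2, a2, c3, b3, a3.
  do 9 (split; [assumption|]).
  intros i j k; unfold reindex; simpl; rewrite E; ring.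
Qed.

Lemma cube_symmetry_flip1 : cube_symmetry flip1.
Proof.
  split; [intros; unfold reindex; simpl; rewrite negb_involutive; reflexivity
         | intro q; unfold tsum, reindex; simpl; ring
         | intro_M33_reindex].
  exists (fun i => a1 (negb i)), b1, c1, (fun i => a2 (negb i)), b2, c2,
    (fun i => a3 (negb i)), b3, c3.
  unfold nonneg2 in *; simpl; repeat split; try tauto.
  intros i j k; unfold reindex; simpl; rewrite E; ring.
Qed.

Lemma cube_symmetry_flip3 : cube_symmetry flip3.
Proof.
  split; [intros; unfold reindex; simpl; rewrite negb_involutive; reflexivity
         | intro q; unfold tsum, reindex; simpl; ring
         | intro_M33_reindex].
  exists a1, b1, (fun k => c1 (negb k)), a2, b2, (fun k => c2 (negb k)),
    a3, b3, (fun k => c3 (negb k)).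
  unfold nonneg2 in *; simpl; repeat split; try tauto.
  intros i j k; unfold reindex; simpl; rewrite E; ring.
Qed.

Lemma peval_ext f p q : (forall i j k, p i j k = q i j k) -> peval f p = peval f q.
Proof. intro E; induction f; simpl; congruence. Qed.

Lemma zariski_closure_ext S x x' :
  (forall i j k, x i j k = x' i j k) -> zariski_closure S x -> zariski_closure S x'.
Proof. intros E Hx f Hf; rewrite <- (peval_ext f x x' E); exact (Hx f Hf). Qed.

Section Symmetric.
Variable s : bool -> bool -> bool -> bool * bool * bool.
Hypothesis Hs : cube_symmetry s.

Lemma Delta7_reindex_sym p : Delta7 p -> Delta7 (reindex s p).
Proof. exact (Delta7_reindex s p (sym_tsum s Hs)). Qed.

Lemma M33_of_reindex p : M33 (reindex s p) -> M33 p.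
Proof. intro H; exact (M33_ext _ _ (sym_invol s Hs p) (sym_M33 s Hs _ H)). Qed.

Lemma bdM_reindex p : bdM p -> bdM (reindex s p).
Proof.
  intros [HD Hb]; split; [exact (Delta7_reindex_sym p HD)|].
  intros e He; destruct (Hb e He) as [[q1 [M1 C1]] [q2 [D2 [M2 C2]]]]; split.
  - exists (reindex s q1); split; [exact (sym_M33 s Hs q1 M1) | exact (close_reindex s e q1 p C1)].
  - exists (reindex s q2); split; [exact (Delta7_reindex_sym q2 D2)|]; split.
    + intro H; exact (M2 (M33_of_reindex q2 H)).
    + exact (close_reindex s e q2 p C2).
Qed.

Lemma zariski_closure_reindex x : zariski_closure bdM x -> zariski_closure bdM (reindex s x).
Proof.
  intros Hx f Hf; destruct (is_poly_peval_reindex s f) as [g Hg].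
  rewrite <- Hg; apply Hx; intros y Hy; rewrite Hg; exact (Hf _ (bdM_reindex y Hy)).
Qed.
End Symmetric.

Lemma zariski_closure_of_reindex s x : cube_symmetry s ->
  zariski_closure bdM (reindex s x) -> zariski_closure bdM x.
Proof.
  intros Hs Hx; apply (zariski_closure_ext _ (reindex s (reindex s x))); [apply (sym_invol s Hs)|].
  exact (zariski_closure_reindex s Hs _ Hx).
Qed.

(* Each slice p_{i..} (i = 0, 1) is b_i (x) c_i plus t_i e_0 (x) e_0, where
   b_i = (p_{i01}, p_{i11}), c_i = (p_{i10} / p_{i11}, 1) and t_i = d_{1,i} / p_{i11};
   the two correction terms share the third summand. *)
Lemma M33_of_d1_pos p : Delta7 p -> 0 < d10 p -> 0 < d11 p -> M33 p.
Proof.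
  intros [Hnn Hsum] H0 H1; split; [split; assumption|]; unfold d10, d11 in *.
  assert (P0 : 0 < p false true true).
  { pose proof (Hnn false false true); pose proof (Hnn false true false);
    pose proof (Hnn false true true); destruct (Rle_lt_or_eq_dec 0 (p false true true)); nra. }
  assert (P1 : 0 < p true true true).
  { pose proof (Hnn true false true); pose proof (Hnn true true false);
    pose proof (Hnn true true true); destruct (Rle_lt_or_eq_dec 0 (p true true true)); nra. }
  set (t0 := (p false false false * p false true true - p false false true * p false true false)
             / p false true true).
  set (t1 := (p true false false * p true true true - p true false true * p true true false)
             / p true true true).
  assert (0 <= t0) by (apply Rlt_le, Rdiv_lt_0_compat; assumption).
  assert (0 <= t1) by (apply Rlt_le, Rdiv_lt_0_compat; assumption).
  assert (0 <= p false true false / p false true true) by (apply Rle_mult_inv_pos; auto).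
  assert (0 <= p true true false / p true true true) by (apply Rle_mult_inv_pos; auto).
  exists (fun i : bool => if i then 0 else 1),
    (fun j : bool => if j then p false true true else p false false true),
    (fun k : bool => if k then 1 else p false true false / p false true true),
    (fun i : bool => if i then 1 else 0),
    (fun j : bool => if j then p true true true else p true false true),
    (fun k : bool => if k then 1 else p true true false / p true true true),
    (fun i : bool => if i then t1 else t0), (fun j : bool => if j then 0 else 1),
    (fun k : bool => if k then 0 else 1).
  unfold nonneg2; simpl.
  repeat split; try lra; try apply Hnn.
  intros [] [] []; simpl; unfold t0, t1; field; lra.
Qed.

Lemma M33_of_d1_prod_pos p : Delta7 p -> 0 < d10 p * d11 p -> M33 p.
Proof.
  intros HD H.
  destruct (Rlt_or_le 0 (d10 p)) as [Hpos | Hnpos].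
  - apply M33_of_d1_pos; [exact HD | exact Hpos | nra].
  - assert (N0 : d10 p < 0) by (destruct Hnpos; [assumption | rewrite H0 in H; lra]).
    assert (N1 : d11 p < 0) by nra.
    apply (M33_of_reindex _ cube_symmetry_flip3), M33_of_d1_pos;
      [exact (Delta7_reindex_sym _ cube_symmetry_flip3 p HD) | |];
      unfold d10, d11, reindex in *; simpl; lra.
Qed.

Lemma M33_of_slice_prod_pos p : Delta7 p ->
  0 < d10 p * d11 p \/ 0 < d20 p * d21 p \/ 0 < d30 p * d31 p -> M33 p.
Proof.
  intros HD [H | [H | H]].
  - exact (M33_of_d1_prod_pos p HD H).
  - apply (M33_of_reindex _ cube_symmetry_swap12), M33_of_d1_prod_pos;
      [exact (Delta7_reindex_sym _ cube_symmetry_swap12 p HD) | exact H].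
  - apply (M33_of_reindex _ cube_symmetry_swap13), M33_of_d1_prod_pos;
      [exact (Delta7_reindex_sym _ cube_symmetry_swap13 p HD)|].
    unfold d10, d11, d30, d31, reindex in *; simpl; lra.
Qed.

Lemma bdM_not_interior p (G : tensor -> Prop) : bdM p -> near p G ->
  (forall q, Delta7 q -> G q -> M33 q) -> False.
Proof.
  intros [_ Hb] [eta [Heta HG]] HM.
  destruct (Hb eta Heta) as [_ [q [Dq [Mq Cq]]]].
  exact (Mq (HM q Dq (HG q Cq))).
Qed.

Lemma bdM_not_exterior p (G : tensor -> Prop) : bdM p -> near p G ->
  (forall q, M33 q -> G q -> False) -> False.
Proof.
  intros [_ Hb] [eta [Heta HG]] HM.
  destruct (Hb eta Heta) as [[q [Mq Cq]] _].
  exact (HM q Mq (HG q Cq)).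
Qed.

Lemma bdM_slice_det_zero p : bdM p ->
  d10 p = 0 \/ d11 p = 0 \/ d20 p = 0 \/ d21 p = 0 \/ d30 p = 0 \/ d31 p = 0.
Proof.
  intro Hb.
  destruct (Req_dec (d10 p) 0); [tauto|]; destruct (Req_dec (d11 p) 0); [tauto|].
  destruct (Req_dec (d20 p) 0); [tauto|]; destruct (Req_dec (d21 p) 0); [tauto|].
  destruct (Req_dec (d30 p) 0); [tauto|]; destruct (Req_dec (d31 p) 0); [tauto|].
  exfalso.
  assert (Hpos : ~ (0 < d10 p * d11 p \/ 0 < d20 p * d21 p \/ 0 < d30 p * d31 p)).
  { intro Hor; apply (bdM_not_interior p (fun q =>
      0 < d10 q * d11 q \/ 0 < d20 q * d21 q \/ 0 < d30 q * d31 q) Hb);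
      [|exact M33_of_slice_prod_pos].
    destruct Hor as [H' | [H' | H']];
      [ apply (near_impl p (fun q => 0 < d10 q * d11 q))
      | apply (near_impl p (fun q => 0 < d20 q * d21 q))
      | apply (near_impl p (fun q => 0 < d30 q * d31 q)) ];
      try tauto; (apply near_pos; [solve_is_poly | exact H']). }
  assert (Hneg : forall x y, x <> 0 -> y <> 0 -> ~ 0 < x * y -> x * y < 0).
  { intros x y Hx Hy Hxy; pose proof (Rmult_integral_contrapositive_currified x y Hx Hy); lra. }
  apply (bdM_not_exterior p (fun q => d10 q * d11 q < 0 /\ d20 q * d21 q < 0 /\
                                       d30 q * d31 q < 0) Hb).
  - repeat apply near_and; apply near_neg; try solve_is_poly; apply Hneg; tauto.
  - intros q Hq Hall; exact (M33_slice_dets_not_all_neg q Hq Hall).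
Qed.

Fixpoint horner (l : list R) (t : R) : R :=
  match l with nil => 0 | c :: l' => c + t * horner l' t end.

Definition is_poly1 (g : R -> R) : Prop := exists l, forall t, g t = horner l t.

Fixpoint ladd (l1 l2 : list R) : list R :=
  match l1, l2 with
  | nil, _ => l2
  | _, nil => l1
  | a :: l1', b :: l2' => (a + b) :: ladd l1' l2'
  end.

Fixpoint lmul (l1 l2 : list R) : list R :=
  match l1 with
  | nil => nil
  | a :: l1' => ladd (map (Rmult a) l2) (0 :: lmul l1' l2)
  end.

Lemma horner_ladd l1 l2 t : horner (ladd l1 l2) t = horner l1 t + horner l2 t.
Proof.
  revert l2; induction l1 as [|a l1 IH]; intros [|b l2]; simpl; try ring.
  rewrite IH; ring.
Qed.

Lemma horner_scale a l t : horner (map (Rmult a) l) t = a * horner l t.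
Proof. induction l as [|b l IH]; simpl; [|rewrite IH]; ring. Qed.

Lemma horner_lmul l1 l2 t : horner (lmul l1 l2) t = horner l1 t * horner l2 t.
Proof.
  induction l1 as [|a l1 IH]; simpl; [ring|].
  rewrite horner_ladd, horner_scale; simpl; rewrite IH; ring.
Qed.

Lemma is_poly1_const c : is_poly1 (fun _ => c).
Proof. exists (c :: nil); intro t; simpl; ring. Qed.

Lemma is_poly1_id : is_poly1 (fun t => t).
Proof. exists (0 :: 1 :: nil); intro t; simpl; ring. Qed.

Lemma is_poly1_add g h : is_poly1 g -> is_poly1 h -> is_poly1 (fun t => g t + h t).
Proof.
  intros [l1 H1] [l2 H2]; exists (ladd l1 l2); intro t; rewrite horner_ladd, H1, H2; reflexivity.
Qed.

Lemma is_poly1_mul g h : is_poly1 g -> is_poly1 h -> is_poly1 (fun t => g t * h t).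
Proof.
  intros [l1 H1] [l2 H2]; exists (lmul l1 l2); intro t; rewrite horner_lmul, H1, H2; reflexivity.
Qed.

Lemma is_poly1_sub g h : is_poly1 g -> is_poly1 h -> is_poly1 (fun t => g t - h t).
Proof.
  intros Hg Hh.
  destruct (is_poly1_add _ _ Hg (is_poly1_mul _ _ (is_poly1_const (-1)) Hh)) as [l Hl].
  exists l; intro t; rewrite <- Hl; ring.
Qed.

Lemma is_poly1_shift g a : is_poly1 g -> is_poly1 (fun s => g (a + s)).
Proof.
  intros [l Hl].
  assert (H : forall l', is_poly1 (fun s => horner l' (a + s))).
  { induction l' as [|c l' IH]; simpl.
    - apply is_poly1_const.
    - apply is_poly1_add; [apply is_poly1_const|].
      apply is_poly1_mul; [|exact IH].
      apply is_poly1_add; [apply is_poly1_const | apply is_poly1_id]. }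
  destruct (H l) as [l' Hl']; exists l'; intro s; rewrite Hl; apply Hl'.
Qed.

Fixpoint abs_sum (l : list R) : R :=
  match l with nil => 0 | c :: l' => Rabs c + abs_sum l' end.

Lemma abs_sum_nonneg l : 0 <= abs_sum l.
Proof. induction l as [|c l IH]; simpl; [lra | pose proof (Rabs_pos c); lra]. Qed.

Lemma horner_bound l t : Rabs t <= 1 -> Rabs (horner l t) <= abs_sum l.
Proof.
  intro Ht; induction l as [|c l IH]; simpl; [rewrite Rabs_R0; lra|].
  eapply Rle_trans; [apply Rabs_triang|]; rewrite Rabs_mult.
  pose proof (Rabs_pos t); pose proof (Rabs_pos (horner l t)); nra.
Qed.

Lemma small_positive_exists r M : 0 < r -> 0 < M ->
  exists s, 0 < s < r /\ s <= 1 /\ s <= M.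
Proof.
  intros Hr HM; exists (Rmin (r / 2) (Rmin 1 M)).
  pose proof (Rmin_l (r / 2) (Rmin 1 M)); pose proof (Rmin_r (r / 2) (Rmin 1 M));
  pose proof (Rmin_l 1 M); pose proof (Rmin_r 1 M).
  assert (0 < Rmin (r / 2) (Rmin 1 M)) by (repeat apply Rmin_pos; lra).
  lra.
Qed.

(* The constant term equals -s * (bounded quantity) for arbitrarily small s > 0. *)
Lemma horner_const_coef_zero c l r : 0 < r ->
  (forall s, 0 < s < r -> c + s * horner l s = 0) -> c = 0.
Proof.
  intros Hr H; destruct (Req_dec c 0) as [E | E]; [exact E | exfalso].
  pose proof (Rabs_pos_lt c E) as Hc; pose proof (abs_sum_nonneg l) as HB.
  destruct (small_positive_exists r (Rabs c / (2 * (abs_sum l + 1))) Hr)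
    as [s [Hs [Hs1 HsM]]]; [apply Rdiv_lt_0_compat; lra|].
  assert (HsB : s * (abs_sum l + 1) <= Rabs c / 2).
  { apply Rle_trans with (Rabs c / (2 * (abs_sum l + 1)) * (abs_sum l + 1)).
    - apply Rmult_le_compat_r; lra.
    - right; field; lra. }
  pose proof (horner_bound l s ltac:(rewrite Rabs_right; lra)) as Hh.
  specialize (H s Hs).
  assert (Rabs c = s * Rabs (horner l s))
    by (replace c with (- (s * horner l s)) by lra; rewrite Rabs_Ropp, Rabs_mult, Rabs_right; lra).
  nra.
Qed.

Lemma horner_vanish_near0 l r : 0 < r ->
  (forall s, 0 < s < r -> horner l s = 0) -> forall s, horner l s = 0.
Proof.
  intros Hr; induction l as [|c l IH]; intros H s; [reflexivity|]; simpl in *.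
  assert (Hc : c = 0) by exact (horner_const_coef_zero c l r Hr H).
  subst c; rewrite IH; [ring|].
  intros s' Hs'; specialize (H s' Hs').
  apply (Rmult_eq_reg_l s'); lra.
Qed.

Lemma is_poly1_vanish g a r : is_poly1 g -> 0 < r ->
  (forall t, a < t < a + r -> g t = 0) -> forall t, g t = 0.
Proof.
  intros Hg Hr H t; destruct (is_poly1_shift g a Hg) as [l Hl].
  replace t with (a + (t - a)) by ring; rewrite Hl.
  apply (horner_vanish_near0 l r Hr); intros s Hs; rewrite <- Hl; apply H; lra.
Qed.

Lemma is_poly1_peval_comp (T : R -> tensor) :
  (forall i j k, is_poly1 (fun s => T s i j k)) -> forall f, is_poly1 (fun s => peval f (T s)).
Proof.
  intros HT f; induction f; simpl; auto using is_poly1_const, is_poly1_add, is_poly1_mul.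
Qed.

Definition upd (y : nat -> R) (n : nat) (s : R) : nat -> R :=
  fun i => if Nat.eqb i n then s else y i.

Lemma is_poly1_upd y n i : is_poly1 (fun s => upd y n s i).
Proof. unfold upd; destruct (Nat.eqb i n); [apply is_poly1_id | apply is_poly1_const]. Qed.

(* Free the coordinates one at a time: after m steps, F vanishes wherever the
   coordinates of index >= m lie in the box. *)
Lemma separately_poly_vanish (F : (nat -> R) -> R) (lo : nat -> R) (r : R) (n : nat) :
  0 < r ->
  (forall y y', (forall i, (i < n)%nat -> y i = y' i) -> F y = F y') ->
  (forall y m, is_poly1 (fun s => F (upd y m s))) ->
  (forall y, (forall i, lo i < y i < lo i + r) -> F y = 0) ->
  forall y, F y = 0.
Proof.
  intros Hr Hext Hpoly Hbox.
  assert (Hstep : forall m y, (forall i, (m <= i)%nat -> lo i < y i < lo i + r) -> F y = 0).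
  { induction m as [|m IH]; intros y Hy; [apply Hbox; intro i; apply Hy; lia|].
    rewrite (Hext y (upd y m (y m)))
      by (intros i _; unfold upd; destruct (Nat.eqb_spec i m); congruence).
    apply (is_poly1_vanish _ (lo m) r (Hpoly y m) Hr); intros t Ht.
    apply IH; intros i Hi; unfold upd; destruct (Nat.eqb_spec i m) as [-> | Hne]; [exact Ht|].
    apply Hy; lia. }
  intro y.
  rewrite (Hext y (fun i => if Nat.ltb i n then y i else lo i + r / 2))
    by (intros i Hi; apply Nat.ltb_lt in Hi; rewrite Hi; reflexivity).
  apply (Hstep n); intros i Hi.
  replace (Nat.ltb i n) with false by (symmetry; apply Nat.ltb_ge; exact Hi); lra.
Qed.

Definition tilt (p : tensor) (s : R) : tensor :=
  fun i j k => if j && k then (if i then p i j k - s else p i j k + s) else p i j k.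

Lemma close_tilt p s e : Rabs s < e -> close e (tilt p s) p.
Proof.
  intros Hs i j k; unfold tilt.
  assert (0 < e) by (pose proof (Rabs_pos s); lra).
  destruct j, k, i; simpl; try (rewrite Rminus_diag, Rabs_R0; exact H);
    [ replace (p true true true - s - p true true true) with (- s) by ring; rewrite Rabs_Ropp
    | replace (p false true true + s - p false true true) with s by ring ]; exact Hs.
Qed.

Lemma tsum_tilt p s : tsum (tilt p s) = tsum p.
Proof. unfold tsum, tilt; simpl; ring. Qed.

Lemma d10_tilt p s : d10 (tilt p s) = d10 p + s * p false false false.
Proof. unfold d10, tilt; simpl; ring. Qed.

Definition generic_on_d10 (q : tensor) : Prop :=
  (forall i j k, 0 < q i j k) /\ d11 q < 0 /\ d20 q * d21 q < 0 /\ d30 q * d31 q < 0.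

Lemma near_generic_on_d10 p : generic_on_d10 p -> near p generic_on_d10.
Proof.
  intros (Hpos & H11 & H2 & H3).
  pose proof is_poly_slice_dets as (P10 & P11 & P20 & P21 & P30 & P31).
  repeat apply near_and.
  - repeat (apply near_forall_bool; intro).
    apply near_pos; [apply is_poly_coord | apply Hpos].
  - apply near_neg; assumption.
  - apply near_neg; [apply is_poly_mul|]; assumption.
  - apply near_neg; [apply is_poly_mul|]; assumption.
Qed.

(* Tilting along (p_011, p_111) changes the sign of d_{1,0} and nothing else that matters:
   one side lies in M33 by the construction, the other outside it by the obstruction. *)
Lemma bdM_of_generic_on_d10 p : tsum p = 1 -> d10 p = 0 -> generic_on_d10 p -> bdM p.
Proof.
  intros Hsum H10 Hgen.
  destruct (near_generic_on_d10 p Hgen) as [eta [Heta Hnear]].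
  assert (HD : forall s, Rabs s < eta -> Delta7 (tilt p s) /\ generic_on_d10 (tilt p s)).
  { intros s Hs; pose proof (Hnear _ (close_tilt p s eta Hs)) as Hq.
    split; [split; [intros i j k; apply Rlt_le, Hq | rewrite tsum_tilt; exact Hsum] | exact Hq]. }
  pose proof (proj1 Hgen false false false) as P000.
  split; [split; [intros i j k; apply Rlt_le, Hgen | exact Hsum]|].
  intros e He.
  destruct (small_positive_exists e (eta / 2) He) as [s [[Hs Hse] [_ Hsn]]]; [lra|].
  assert (Habs : forall t, t = s \/ t = - s -> Rabs t < e /\ Rabs t < eta)
    by (intros t [-> | ->]; rewrite ?Rabs_Ropp, Rabs_right; lra).
  assert (Hsp : 0 < s * p false false false) by (apply Rmult_lt_0_compat; assumption).
  split.
  - destruct (Habs (- s) (or_intror eq_refl)) as [Hte Hteta].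
    exists (tilt p (- s)); split; [|exact (close_tilt p (- s) e Hte)].
    destruct (HD (- s) Hteta) as [Dq [_ [H11 _]]].
    apply M33_of_slice_prod_pos; [exact Dq | left].
    rewrite d10_tilt, H10; nra.
  - destruct (Habs s (or_introl eq_refl)) as [Hte Hteta].
    exists (tilt p s); destruct (HD s Hteta) as [Dq [_ [H11 Hrest]]].
    split; [exact Dq | split; [|exact (close_tilt p s e Hte)]].
    intro HM; apply (M33_slice_dets_not_all_neg _ HM); split; [|exact Hrest].
    rewrite d10_tilt, H10; nra.
Qed.

Definition param_d10 (y : nat -> R) : tensor := fun i j k =>
  match i, j, k with
  | false, false, false => y 0%nat * y 2%nat
  | false, false, true => y 0%nat * y 3%nat
  | false, true, false => y 1%nat * y 2%nat
  | false, true, true => y 1%nat * y 3%nat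
  | true, false, false => y 4%nat
  | true, false, true => y 5%nat
  | true, true, false => y 6%nat
  | true, true, true => 1 - (y 0%nat * y 2%nat + y 0%nat * y 3%nat + y 1%nat * y 2%nat
                             + y 1%nat * y 3%nat + y 4%nat + y 5%nat + y 6%nat)
  end.

(* At the centre of the box, p_{0jk} = 1/11 and (p_100, p_101, p_110, p_111) = (1, 2, 3, 1)/11,
   where d_{1,1} < 0 < d_{2,0}, d_{3,0} and d_{2,1}, d_{3,1} < 0. *)
Definition box_lo (i : nat) : R :=
  match i with
  | 0 | 1 | 4 => 1 / 11
  | 2 | 3 => 1
  | 5 => 2 / 11
  | 6 => 3 / 11
  | _ => 0
  end.

Lemma generic_param_box y : (forall i, box_lo i < y i < box_lo i + 1 / 100) ->
  generic_on_d10 (param_d10 y).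
Proof.
  intro Hy.
  pose proof (Hy 0%nat) as Ha0; pose proof (Hy 1%nat) as Ha1; pose proof (Hy 2%nat) as Hc0;
  pose proof (Hy 3%nat) as Hc1; pose proof (Hy 4%nat) as Hz1; pose proof (Hy 5%nat) as Hz2;
  pose proof (Hy 6%nat) as Hz3; simpl in Ha0, Ha1, Hc0, Hc1, Hz1, Hz2, Hz3.
  unfold generic_on_d10, d11, d20, d21, d30, d31, param_d10.
  set (a0 := y 0%nat) in *; set (a1 := y 1%nat) in *; set (c0 := y 2%nat) in *;
  set (c1 := y 3%nat) in *; set (z1 := y 4%nat) in *; set (z2 := y 5%nat) in *;
  set (z3 := y 6%nat) in *; clearbody a0 a1 c0 c1 z1 z2 z3; clear Hy.
  assert (Hlo : 4 / 11 < (a0 + a1) * (c0 + c1)) by nra.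
  assert (Hhi : (a0 + a1) * (c0 + c1) < 9 / 20) by nra.
  set (t := 1 - (a0 * c0 + a0 * c1 + a1 * c0 + a1 * c1 + z1 + z2 + z3)).
  assert (Ht : 0 < t < 1 / 11) by (unfold t; nra).
  clearbody t.
  assert (Hpos_neg : forall u v, 0 < u -> v < 0 -> u * v < 0) by (intros; nra).
  split; [intros [] [] []; nra|].
  split; [nra|]; split; apply Hpos_neg.
  - replace (a0 * c0 * z2 - a0 * c1 * z1) with (a0 * (c0 * z2 - c1 * z1)) by ring.
    apply Rmult_lt_0_compat; nra.
  - replace (a1 * c0 * t - a1 * c1 * z3) with (a1 * (c0 * t - c1 * z3)) by ring.
    assert (c0 * t - c1 * z3 < 0) by nra; nra.
  - replace (a0 * c0 * z3 - a1 * c0 * z1) with (c0 * (a0 * z3 - a1 * z1)) by ring.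
    apply Rmult_lt_0_compat; nra.
  - replace (a0 * c1 * t - a1 * c1 * z2) with (c1 * (a0 * t - a1 * z2)) by ring.
    assert (a0 * t - a1 * z2 < 0) by nra; nra.
Qed.

Lemma bdM_param_box y : (forall i, box_lo i < y i < box_lo i + 1 / 100) -> bdM (param_d10 y).
Proof.
  intro Hy; apply bdM_of_generic_on_d10; [| |exact (generic_param_box y Hy)];
    unfold tsum, d10, param_d10; simpl; ring.
Qed.

Lemma param_d10_onto x : tsum x = 1 -> d10 x = 0 ->
  exists y, forall i j k, param_d10 y i j k = x i j k.
Proof.
  intros Hsum Hd; unfold tsum, d10 in *.
  assert (Hrank1 : exists a0 a1 c0 c1,
            a0 * c0 = x false false false /\ a0 * c1 = x false false true /\
            a1 * c0 = x false true false /\ a1 * c1 = x false true true).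
  { destruct (Req_dec (x false false false) 0) as [E0 | E0].
    - destruct (Req_dec (x false false true) 0) as [E1 | E1].
      + exists 0, 1, (x false true false), (x false true true); repeat split; lra.
      + assert (E2 : x false true false = 0).
        { rewrite E0 in Hd; apply (Rmult_eq_reg_l (x false false true)); [lra | exact E1]. }
        exists 1, (x false true true / x false false true), 0, (x false false true).
        repeat split; try lra; field; exact E1.
    - exists 1, (x false true false / x false false false),
        (x false false false), (x false false true).
      repeat split; try lra; [field; exact E0|].
      apply (Rmult_eq_reg_l (x false false false)); [|exact E0].
      field_simplify; [lra | exact E0]. }
  destruct Hrank1 as (a0 & a1 & c0 & c1 & H00 & H01 & H10 & H11).
  exists (fun n => match n with
                   | 0 => a0 | 1 => a1 | 2 => c0 | 3 => c1
                   | 4 => x true false false | 5 => x true false true | _ => x true true false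
                   end).
  intros [] [] []; simpl; lra.
Qed.

Lemma is_poly1_param f y m : is_poly1 (fun s => peval f (param_d10 (upd y m s))).
Proof.
  apply is_poly1_peval_comp; intros [] [] []; simpl;
  repeat first [ apply is_poly1_upd | apply is_poly1_const | apply is_poly1_sub
               | apply is_poly1_add | apply is_poly1_mul ].
Qed.

Lemma zariski_closure_V10 x : tsum x = 1 -> d10 x = 0 -> zariski_closure bdM x.
Proof.
  intros Hsum Hd f Hf.
  destruct (param_d10_onto x Hsum Hd) as [y Hy]; rewrite <- (peval_ext f _ _ Hy).
  apply (separately_poly_vanish (fun y => peval f (param_d10 y)) box_lo (1 / 100) 7);
    [lra | | exact (is_poly1_param f) | intros y' Hy'; exact (Hf _ (bdM_param_box y' Hy'))].
  intros y1 y2 E; apply peval_ext; intros [] [] []; simpl;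
    rewrite ?(E 0%nat), ?(E 1%nat), ?(E 2%nat), ?(E 3%nat), ?(E 4%nat), ?(E 5%nat), ?(E 6%nat)
      by lia; reflexivity.
Qed.

Lemma zariski_closure_V11 x : tsum x = 1 -> d11 x = 0 -> zariski_closure bdM x.
Proof.
  intros Hsum Hd; apply (zariski_closure_of_reindex _ x cube_symmetry_flip1).
  apply zariski_closure_V10; [rewrite (sym_tsum _ cube_symmetry_flip1); exact Hsum|].
  rewrite <- Hd; unfold d10, d11, reindex; simpl; ring.
Qed.

Lemma slice_hypersurfaces_in_zariski_closure x : tsum x = 1 ->
  d10 x = 0 \/ d11 x = 0 \/ d20 x = 0 \/ d21 x = 0 \/ d30 x = 0 \/ d31 x = 0 ->
  zariski_closure bdM x.
Proof.
  intros Hsum Hd.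
  assert (H12 : tsum (reindex swap12 x) = 1)
    by (rewrite (sym_tsum _ cube_symmetry_swap12); exact Hsum).
  assert (H13 : tsum (reindex swap13 x) = 1)
    by (rewrite (sym_tsum _ cube_symmetry_swap13); exact Hsum).
  destruct Hd as [H | [H | [H | [H | [H | H]]]]].
  - exact (zariski_closure_V10 x Hsum H).
  - exact (zariski_closure_V11 x Hsum H).
  - apply (zariski_closure_of_reindex _ x cube_symmetry_swap12), zariski_closure_V10; [exact H12|].
    rewrite <- H; unfold d10, d20, reindex; simpl; ring.
  - apply (zariski_closure_of_reindex _ x cube_symmetry_swap12), zariski_closure_V11; [exact H12|].
    rewrite <- H; unfold d11, d21, reindex; simpl; ring.
  - apply (zariski_closure_of_reindex _ x cube_symmetry_swap13), zariski_closure_V10; [exact H13|].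
    rewrite <- H; unfold d10, d30, reindex; simpl; ring.
  - apply (zariski_closure_of_reindex _ x cube_symmetry_swap13), zariski_closure_V11; [exact H13|].
    rewrite <- H; unfold d11, d31, reindex; simpl; ring.
Qed.

Lemma zariski_closure_vanish S x F :
  zariski_closure S x -> is_poly F -> (forall y, S y -> F y = 0) -> F x = 0.
Proof. intros Hx [f Hf] HS; rewrite <- Hf; apply Hx; intros y Hy; rewrite Hf; exact (HS y Hy). Qed.

Lemma zariski_closure_in_slice_hypersurfaces x : zariski_closure bdM x ->
  tsum x = 1 /\ (d10 x = 0 \/ d11 x = 0 \/ d20 x = 0 \/ d21 x = 0 \/ d30 x = 0 \/ d31 x = 0).
Proof.
  intro Hx; split.
  - assert (H : tsum x - 1 = 0); [|lra].
    apply (zariski_closure_vanish bdM x (fun y => tsum y - 1) Hx); [solve_is_poly|].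
    intros y [[_ Hy] _]; lra.
  - assert (H : d10 x * (d11 x * (d20 x * (d21 x * (d30 x * d31 x)))) = 0).
    { apply (zariski_closure_vanish bdM x
               (fun y => d10 y * (d11 y * (d20 y * (d21 y * (d30 y * d31 y))))) Hx);
        [solve_is_poly|].
      intros y Hy; destruct (bdM_slice_det_zero y Hy) as [E | [E | [E | [E | [E | E]]]]];
        rewrite E; ring. }
    repeat (apply Rmult_integral in H; destruct H as [H | H]; [tauto|]); tauto.
Qed.

Theorem mainTheorem12 :
  (forall p : tensor, bdM p ->
     d10 p = 0 \/ d11 p = 0 \/ d20 p = 0 \/ d21 p = 0 \/ d30 p = 0 \/ d31 p = 0) /\
  (forall x : tensor, zariski_closure bdM x <->
     (tsum x = 1 /\
      (d10 x = 0 \/ d11 x = 0 \/ d20 x = 0 \/ d21 x = 0 \/ d30 x = 0 \/ d31 x = 0))).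
Proof.
  split; [exact bdM_slice_det_zero|]; intro x; split.
  - exact (zariski_closure_in_slice_hypersurfaces x).
  - intros [Hsum Hd]; exact (slice_hypersurfaces_in_zariski_closure x Hsum Hd).
Qed.
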